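(* Fix $\lambda\in\mathbb{R}^m$ and $\beta>0$, and let $\theta\mapsto\pi_\theta$ be a differentiable policy parameterization. Then $$\nabla_\theta\mathcal{L}^\beta(\pi_\theta,\lambda)=\sum_{s\in\mathcal{S}}\frac{d^{\pi_\theta}(s)}{1-\gamma}\sum_{a\in\mathcal{A}}Q^{\pi_\theta}_{\Gamma(\pi_\theta)}(s,a)\,\frac{\partial\pi_\theta(a\mid s)}{\partial\theta},$$ where $\Gamma(\pi)=r-\beta\sum_{i=1}^m c_i\min\{V^\pi_{c_i}(\rho)-b_i-\lambda_i/\beta,0\}$ and $Q^\pi_{\Gamma(\pi)}$ is the state-action value function for the (fixed) reward function $\Gamma(\pi)$.
   Context: CMDP: finite $\mathcal{S}$, $\mathcal{A}$; transition kernel $\mathcal{P}$; initial distribution $\rho$; discount $\gamma\in[0,1)$; reward $r:\mathcal{S}\times\mathcal{A}\to[0,1]$; constraint rewards $c_i:\mathcal{S}\times\mathcal{A}\to[0,1]$, thresholds $b_i\ge0$, $i\in[m]$. For bounded $u$, $Q^\pi_u(s,a)=\mathbb{E}[\sum_{\tau\ge0}\gamma^\tau u(s_\tau,a_\tau)\mid s_0=s,a_0=a]$ under $\mathcal{P}$ and $\pi$, $V^\pi_u(s)=\sum_a\pi(a\mid s)Q^\pi_u(s,a)$, $V^\pi_u(\rho)=\sum_s\rho(s)V^\pi_u(s)$. Discounted state visitation distribution: $d^\pi(s)=(1-\gamma)\sum_{s_0}\rho(s_0)\sum_{\tau\ge0}\gamma^\tau\Pr^\pi[s_\tau=s\mid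 s_0]$. Augmented Lagrangian: $\mathcal{L}^\beta(\pi,\lambda)=V^\pi_r(\rho)+\frac{\beta}{2}\sum_i\big(-\min\{V^\pi_{c_i}(\rho)-b_i-\lambda_i/\beta,0\}^2+\lambda_i^2/\beta^2\big)$. *)

From HB Require Import structures.
From mathcomp Require Import all_boot all_order all_algebra.
From mathcomp Require Import all_classical all_reals all_analysis.
Set Implicit Arguments. Unset Strict Implicit. Unset Printing Implicit Defensive.
Import Order.TTheory GRing.Theory Num.Theory.
Import numFieldNormedType.Exports.
Local Open Scope ring_scope.

(* Finite CMDP.  A policy is  pi : S -> A -> R  with  pi s a = pi(a|s);
   the transition kernel is  P : S -> A -> S -> R  with  P s a s' = P(s'|s,a). *)

Section CMDP.
Variables (R : realType) (S A : finType).

Definition is_distr (T : finType) (p : T -> R) : Prop :=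
  (forall x, 0 <= p x) /\ \sum_(x : T) p x = 1.

Definition is_policy (pi : S -> A -> R) : Prop := forall s, is_distr (pi s).

Definition is_kernel (P : S -> A -> S -> R) : Prop := forall s a, is_distr (P s a).

Definition rseries (F : nat -> R) : R := limn (series F).

Variables (P : S -> A -> S -> R) (gamma : R).

(* sa_prob pi s a t s' a' = Pr^pi[ s_t = s', a_t = a' | s_0 = s, a_0 = a ] *)
Fixpoint sa_prob (pi : S -> A -> R) (s : S) (a : A) (t : nat) : S -> A -> R :=
  match t with
  | 0 => fun s' a' => if (s' == s) && (a' == a) then 1 else 0
  | t.+1 => fun s' a' =>
      \sum_(s'' : S) \sum_(a'' : A) sa_prob pi s a t s'' a'' * P s'' a'' s' * pi s' a'
  end.

(* st_prob pi s0 t s = Pr^pi[ s_t = s | s_0 = s0 ] *)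
Fixpoint st_prob (pi : S -> A -> R) (s0 : S) (t : nat) : S -> R :=
  match t with
  | 0 => fun s => if s == s0 then 1 else 0
  | t.+1 => fun s =>
      \sum_(s' : S) \sum_(a : A) st_prob pi s0 t s' * pi s' a * P s' a s
  end.

Definition Qfun (pi : S -> A -> R) (u : S -> A -> R) (s : S) (a : A) : R :=
  rseries (fun t => gamma ^+ t *
     \sum_(s' : S) \sum_(a' : A) sa_prob pi s a t s' a' * u s' a').

Definition Vfun (pi : S -> A -> R) (u : S -> A -> R) (s : S) : R :=
  \sum_(a : A) pi s a * Qfun pi u s a.

Definition Vrho (rho : S -> R) (pi : S -> A -> R) (u : S -> A -> R) : R :=
  \sum_(s : S) rho s * Vfun pi u s.

Definition dvisit (rho : S -> R) (pi : S -> A -> R) (s : S) : R :=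
  (1 - gamma) * \sum_(s0 : S) rho s0 * rseries (fun t => gamma ^+ t * st_prob pi s0 t s).

Variables (m : nat) (rho : S -> R) (r : S -> A -> R)
  (c : 'I_m -> S -> A -> R) (b : 'I_m -> R).

Definition augLag (beta : R) (lam : 'I_m -> R) (pi : S -> A -> R) : R :=
  Vrho rho pi r + beta / 2 *
    \sum_(i < m) (- (Num.min (Vrho rho pi (c i) - b i - lam i / beta) 0) ^+ 2
                  + lam i ^+ 2 / beta ^+ 2).

Definition Gamma (beta : R) (lam : 'I_m -> R) (pi : S -> A -> R) : S -> A -> R :=
  fun s a => r s a - beta *
    \sum_(i < m) c i s a * Num.min (Vrho rho pi (c i) - b i - lam i / beta) 0.

End CMDP.

From HB Require Import structures.
From mathcomp Require Import all_boot all_order all_algebra.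
From mathcomp Require Import all_classical all_reals all_analysis.
From mathcomp.algebra_tactics Require Import ring lra.
Import Order.TTheory GRing.Theory Num.Theory.
Import numFieldNormedType.Exports.
Local Open Scope ring_scope.
Set Implicit Arguments. Unset Strict Implicit. Unset Printing Implicit Defensive.

(* For a fixed reward u, V^pi_u is the unique solution of the Bellman equation
   z = E_pi[u] + gamma P_pi z, whose right-hand side is a contraction for
   gamma < 1.  Solving it by Cramer's rule shows that V^{pi_theta}_u is
   differentiable in theta.  Differentiating V(s) = sum_a pi(a|s) Q(s,a) with
   Q = u + gamma P V shows that D V solves the Bellman equation with reward
   g(s) = sum_a Q(s,a) D pi(a|s); its unique solution is the resolvent
   sum_t gamma^t P_pi^t g, which averaged over rho is the d^pi-weighted sum of
   g / (1 - gamma).  For the augmented Lagrangian, the chain rule through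
   x |-> min(x, 0)^2 (with derivative 2 min(x, 0)) yields a linear combination
   of gradients of values, and linearity of V in the reward turns it into the
   policy gradient for the frozen reward Gamma(pi_theta). *)

Section DiscountedSeries.
Variables (R : realType) (gamma : R).
Hypothesis gamma01 : 0 <= gamma < 1.

Definition bounded_seq (e : nat -> R) := exists B, forall t, `|e t| <= B.

Lemma bounded_seq_sum (I : Type) (r : seq I) (k : I -> R) (f : I -> nat -> R) :
  (forall i, bounded_seq (f i)) -> bounded_seq (fun t => \sum_(i <- r) k i * f i t).
Proof.
move=> fb; elim: r => [|x r [B IH]].
  by exists 0 => t; rewrite big_nil normr0.
have [Bx hx] := fb x.
exists (`|k x| * Bx + B) => t; rewrite big_cons.
apply: le_trans (ler_normD _ _) _; apply: lerD => //.
by rewrite normrM ler_wpM2l.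
Qed.

Definition discounted_sum (e : nat -> R) := rseries (fun t => gamma ^+ t * e t).

Lemma is_cvg_discounted (e : nat -> R) :
  bounded_seq e -> cvgn (series (fun t => gamma ^+ t * e t)).
Proof.
move=> [B eB]; have /andP[g0 g1] := gamma01.
have B0 : 0 <= B by apply: le_trans (eB 0%N).
apply: normed_cvg; apply: (@series_le_cvg _ _ (geometric B gamma)) => [n|n|n|] /=.
- by [].
- by rewrite mulr_ge0 // exprn_ge0.
- by rewrite normrM ger0_norm ?exprn_ge0 // mulrC ler_wpM2r // exprn_ge0.
- by apply: is_cvg_geometric_series; rewrite ger0_norm.
Qed.

Lemma discounted_sumS (e : nat -> R) : bounded_seq e ->
  discounted_sum e = e 0%N + gamma * discounted_sum (fun t => e t.+1).
Proof.
move=> [B eB].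
have cvg_tail : cvgn (series (fun t => gamma ^+ t * e t.+1)).
  by apply: is_cvg_discounted; exists B.
have seriesS n : series (fun t => gamma ^+ t * e t) n.+1 =
    e 0%N + gamma * series (fun t => gamma ^+ t * e t.+1) n.
  rewrite !seriesEord /= big_ord_recl /= expr0 mul1r mulr_sumr.
  by congr (_ + _); apply: eq_bigr => i _; rewrite /bump /= exprS mulrA.
apply: cvg_lim => //; rewrite -cvg_shiftS.
under eq_fun do rewrite seriesS.
by apply: cvgD; [exact: cvg_cst | exact: cvgMl_tmp].
Qed.

Lemma discounted_sumD (e1 e2 : nat -> R) : bounded_seq e1 -> bounded_seq e2 ->
  discounted_sum (fun t => e1 t + e2 t) = discounted_sum e1 + discounted_sum e2.
Proof.
move=> b1 b2; rewrite /discounted_sum /rseries -lim_seriesD; try exact: is_cvg_discounted.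
by congr (limn (series _)); apply/funext => t; rewrite mulrDr.
Qed.

Lemma discounted_sum_lin (I : finType) (k : I -> R) (f : I -> nat -> R) :
  (forall i, bounded_seq (f i)) ->
  discounted_sum (fun t => \sum_i k i * f i t) = \sum_i k i * discounted_sum (f i).
Proof.
move=> fb; apply: cvg_lim => //.
have -> : series (fun t => gamma ^+ t * \sum_i k i * f i t) =
    (fun n => \sum_i k i * series (fun t => gamma ^+ t * f i t) n).
  apply/funext => n; rewrite seriesEord /=.
  under eq_bigr do rewrite mulr_sumr.
  rewrite exchange_big /=; apply: eq_bigr => i _.
  by rewrite seriesEord /= mulr_sumr; apply: eq_bigr => j _; rewrite mulrCA.
apply: cvg_big => [|i _]; first exact: add_continuous.
apply: cvgMl_tmp; exact: is_cvg_discounted.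
Qed.

End DiscountedSeries.

Section FiniteSums.
Variable R : pzRingType.

Lemma sum_if_eq (T : finType) (y : T) (F : T -> R) :
  \sum_x (if x == y then F x else 0) = F y.
Proof. by rewrite -big_mkcond big_pred1_eq. Qed.

Lemma sum_if_eq_sym (T : finType) (y : T) (F : T -> R) :
  \sum_x (if y == x then F x else 0) = F y.
Proof. by under eq_bigr do rewrite eq_sym; rewrite sum_if_eq. Qed.

Lemma sum_if_const (T : finType) (b : bool) (F : T -> R) :
  \sum_x (if b then F x else 0) = if b then \sum_x F x else 0.
Proof. by case: b; rewrite // big1. Qed.

Lemma if_andb0 (b1 b2 : bool) (x : R) :
  (if b1 && b2 then x else 0) = if b1 then (if b2 then x else 0) else 0.
Proof. by case: b1. Qed.

Lemma mulr_if0l (b : bool) (x y : R) :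
  (if b then x else 0) * y = if b then x * y else 0.
Proof. by case: b; rewrite ?mul0r. Qed.

Lemma mulr_if0r (b : bool) (x y : R) :
  y * (if b then x else 0) = if b then y * x else 0.
Proof. by case: b; rewrite ?mulr0. Qed.

Lemma exchange_big_pairs (X Y Z W : finType) (f : X -> Y -> Z -> W -> R) :
  \sum_x \sum_y \sum_z \sum_w f x y z w = \sum_z \sum_w \sum_x \sum_y f x y z w.
Proof.
under eq_bigr do rewrite exchange_big.
rewrite exchange_big; apply: eq_bigr => z _.
under eq_bigr do rewrite exchange_big.
by rewrite exchange_big.
Qed.

End FiniteSums.

Lemma ler_norm_avg (R : realDomainType) (T : finType) (p F : T -> R) (M : R) :
  (forall x, 0 <= p x) -> \sum_x p x = 1 -> (forall x, `|F x| <= M) ->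
  `|\sum_x p x * F x| <= M.
Proof.
move=> p0 p1 FM; apply: le_trans (ler_norm_sum _ _ _) _.
rewrite -[M]mul1r -p1 mulr_suml; apply: ler_sum => x _.
by rewrite normrM ger0_norm // ler_wpM2l.
Qed.

Section MarkovChain.
Variables (R : realType) (S A : finType) (P : S -> A -> S -> R) (pi : S -> A -> R).
Hypotheses (hP : is_kernel P) (hpi : is_policy pi).

Lemma kernel_ge0 s a s' : 0 <= P s a s'. Proof. exact: (hP s a).1. Qed.
Lemma kernel_sum1 s a : \sum_s' P s a s' = 1. Proof. exact: (hP s a).2. Qed.
Lemma policy_ge0 s a : 0 <= pi s a. Proof. exact: (hpi s).1. Qed.
Lemma policy_sum1 s : \sum_a pi s a = 1. Proof. exact: (hpi s).2. Qed.

Lemma sa_prob_ge0 s a t s' a' : 0 <= sa_prob P pi s a t s' a'.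
Proof.
elim: t s' a' => [|t IH] s' a' /=; first by case: ifP.
apply: sumr_ge0 => s'' _; apply: sumr_ge0 => a'' _.
by rewrite !mulr_ge0 ?kernel_ge0 ?policy_ge0.
Qed.

Lemma sa_prob_sum1 s a t : \sum_s' \sum_a' sa_prob P pi s a t s' a' = 1.
Proof.
elim: t => [|t IH] /=.
  under eq_bigr do under eq_bigr do rewrite if_andb0.
  by under eq_bigr do rewrite sum_if_const; rewrite !sum_if_eq.
rewrite -IH exchange_big_pairs; apply: eq_bigr => s'' _; apply: eq_bigr => a'' _.
under eq_bigr do rewrite -mulr_sumr policy_sum1 mulr1.
by rewrite -mulr_sumr kernel_sum1 mulr1.
Qed.

Lemma sa_prob_first_step t s a s2 a2 :
  sa_prob P pi s a t.+1 s2 a2 =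
  \sum_s1 \sum_a1 P s a s1 * pi s1 a1 * sa_prob P pi s1 a1 t s2 a2.
Proof.
elim: t s a s2 a2 => [|t IH] s a s2 a2.
  rewrite [LHS]/=.
  under eq_bigr do under eq_bigr do rewrite if_andb0 !mulr_if0l.
  under eq_bigr do rewrite sum_if_const.
  rewrite !sum_if_eq !mul1r.
  under eq_bigr do under eq_bigr do
    rewrite [sa_prob _ _ _ _ 0 _ _]/= if_andb0 !mulr_if0r mulr1.
  by under eq_bigr do rewrite sum_if_const; rewrite !sum_if_eq_sym.
transitivity (\sum_s'' \sum_a'' sa_prob P pi s a t.+1 s'' a'' * P s'' a'' s2 * pi s2 a2).
  by [].
under eq_bigr do under eq_bigr do rewrite IH !mulr_suml.
under eq_bigr do under eq_bigr do under eq_bigr do rewrite !mulr_suml.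
rewrite exchange_big_pairs [RHS]/=; apply: eq_bigr => s1 _; apply: eq_bigr => a1 _.
rewrite mulr_sumr; apply: eq_bigr => s'' _.
by rewrite mulr_sumr; apply: eq_bigr => a'' _; rewrite !mulrA.
Qed.

Lemma st_prob_ge0 s0 t s : 0 <= st_prob P pi s0 t s.
Proof.
elim: t s => [|t IH] s /=; first by case: ifP.
apply: sumr_ge0 => s' _; apply: sumr_ge0 => a _.
by rewrite !mulr_ge0 ?kernel_ge0 ?policy_ge0.
Qed.

Lemma st_prob_sum1 s0 t : \sum_s st_prob P pi s0 t s = 1.
Proof.
elim: t => [|t IH] /=; first by rewrite sum_if_eq.
rewrite -IH exchange_big /=; apply: eq_bigr => s' _.
rewrite exchange_big /=.
under eq_bigr do rewrite -mulr_sumr kernel_sum1 mulr1.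
by rewrite -mulr_sumr policy_sum1 mulr1.
Qed.

Lemma st_prob_le1 s0 t s : st_prob P pi s0 t s <= 1.
Proof.
rewrite -(st_prob_sum1 s0 t) (bigD1 s) //= lerDl.
by apply: sumr_ge0 => i _; apply: st_prob_ge0.
Qed.

Lemma st_prob_first_step t s0 s :
  st_prob P pi s0 t.+1 s =
  \sum_s1 (\sum_a pi s0 a * P s0 a s1) * st_prob P pi s1 t s.
Proof.
elim: t s0 s => [|t IH] s0 s.
  rewrite [LHS]/=.
  under eq_bigr do under eq_bigr do rewrite !mulr_if0l mul1r.
  under eq_bigr do rewrite sum_if_const.
  rewrite sum_if_eq; under [RHS]eq_bigr do rewrite [st_prob _ _ _ 0 _]/= mulr_if0r mulr1.
  by rewrite sum_if_eq_sym.
transitivity (\sum_s' \sum_a st_prob P pi s0 t.+1 s' * pi s' a * P s' a s).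
  by [].
under eq_bigr do under eq_bigr do rewrite IH !mulr_suml.
under eq_bigr do rewrite exchange_big.
rewrite exchange_big; apply: eq_bigr => s1 _.
rewrite [in RHS]/= mulr_sumr; apply: eq_bigr => s' _.
by rewrite mulr_sumr; apply: eq_bigr => a _; rewrite !mulrA.
Qed.

End MarkovChain.

Section Bellman.
Variables (R : realType) (S A : finType) (P : S -> A -> S -> R) (gamma : R).
Variable pi : S -> A -> R.
Hypotheses (hP : is_kernel P) (gamma01 : 0 <= gamma < 1) (hpi : is_policy pi).

Definition bellman_solution (g z : S -> R) :=
  forall s, z s = g s + gamma * \sum_a pi s a * \sum_s1 P s a s1 * z s1.


(* The maximum of |z| is at most gamma times itself. *)
Lemma bellman_solution0 (z : S -> R) :
  bellman_solution (fun=> 0) z -> forall s, z s = 0.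
Proof.
move=> hz; have /andP[g0 g1] := gamma01.
set M := \big[Num.max/0]_s `|z s|.
have zM s : `|z s| <= M by apply: le_bigmax.
have M0 : 0 <= M by rewrite /M; elim/big_ind: _ => //= x y hx _; rewrite le_max hx.
have zgM s : `|z s| <= gamma * M.
  rewrite hz add0r normrM ger0_norm // ler_wpM2l //.
  apply: ler_norm_avg => [a||a]; [exact: policy_ge0 | exact: policy_sum1 |].
  by apply: ler_norm_avg => [s1||s1]; [exact: kernel_ge0 | exact: kernel_sum1 | exact: zM].
have M_le0 : M <= 0.
  have : M <= gamma * M by apply: bigmax_le => //; rewrite mulr_ge0.
  by nra.
by move=> s; apply/eqP; rewrite -normr_le0; exact: le_trans (zM s) M_le0.
Qed.

Lemma bellman_solution_uniq (g z1 z2 : S -> R) :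
  bellman_solution g z1 -> bellman_solution g z2 -> forall s, z1 s = z2 s.
Proof.
move=> h1 h2 s; apply/eqP; rewrite -subr_eq0; apply/eqP.
apply: (@bellman_solution0 (fun s => z1 s - z2 s)) => s' /=.
rewrite add0r h1 h2 opprD addrACA subrr add0r -mulrBr -sumrB; congr (_ * _).
apply: eq_bigr => a _; rewrite -mulrBr -sumrB; congr (_ * _).
by apply: eq_bigr => s1 _; rewrite mulrBr.
Qed.

Definition expected_reward (u : S -> A -> R) s a t :=
  \sum_s' \sum_a' sa_prob P pi s a t s' a' * u s' a'.

Lemma QfunE u s a :
  Qfun P gamma pi u s a = discounted_sum gamma (expected_reward u s a).
Proof. by []. Qed.

Lemma bounded_expected_reward u s a : bounded_seq (expected_reward u s a).
Proof.
exists (\sum_(p : S * A) `|u p.1 p.2|) => t.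
rewrite /expected_reward pair_big /=.
apply: ler_norm_avg => [p||p].
- exact: sa_prob_ge0.
- by rewrite -(sa_prob_sum1 hP hpi s a t) pair_big.
- by rewrite (bigD1 p) //= lerDl; apply: sumr_ge0 => q _; exact: normr_ge0.
Qed.

Lemma expected_reward0 u s a : expected_reward u s a 0 = u s a.
Proof.
rewrite /expected_reward /=.
under eq_bigr do under eq_bigr do rewrite if_andb0 !mulr_if0l mul1r.
by under eq_bigr do rewrite sum_if_const; rewrite !sum_if_eq.
Qed.

Lemma expected_rewardS u s a t :
  expected_reward u s a t.+1 =
  \sum_s1 P s a s1 * \sum_a1 pi s1 a1 * expected_reward u s1 a1 t.
Proof.
rewrite /expected_reward.
under eq_bigr do under eq_bigr do rewrite sa_prob_first_step mulr_suml.
under eq_bigr do under eq_bigr do under eq_bigr do rewrite mulr_suml.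
rewrite exchange_big_pairs; apply: eq_bigr => s1 _.
rewrite mulr_sumr; apply: eq_bigr => a1 _.
rewrite !mulr_sumr; apply: eq_bigr => s' _.
by rewrite !mulr_sumr; apply: eq_bigr => a' _; rewrite !mulrA.
Qed.

Lemma expected_reward_lin (I : finType) (u : S -> A -> R) (k : I -> R)
    (U : I -> S -> A -> R) s a t :
  expected_reward (fun s a => u s a + \sum_i k i * U i s a) s a t =
  expected_reward u s a t + \sum_i k i * expected_reward (U i) s a t.
Proof.
rewrite /expected_reward.
under eq_bigr do under eq_bigr do rewrite mulrDr mulr_sumr.
under eq_bigr do rewrite big_split /=.
rewrite big_split /=; congr (_ + _).
under eq_bigr do rewrite exchange_big /=.
rewrite exchange_big /=; apply: eq_bigr => i _.
rewrite mulr_sumr; apply: eq_bigr => s' _.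
by rewrite mulr_sumr; apply: eq_bigr => a' _; rewrite mulrCA.
Qed.

Lemma Qfun_bellman u s a :
  Qfun P gamma pi u s a = u s a + gamma * \sum_s1 P s a s1 * Vfun P gamma pi u s1.
Proof.
rewrite QfunE discounted_sumS //; last exact: bounded_expected_reward.
rewrite expected_reward0; congr (_ + _ * _).
under eq_fun do rewrite expected_rewardS.
rewrite discounted_sum_lin //; last first.
  by move=> s1; apply: bounded_seq_sum => a1; exact: bounded_expected_reward.
apply: eq_bigr => s1 _; congr (_ * _).
by rewrite discounted_sum_lin // => a1; exact: bounded_expected_reward.
Qed.

Lemma Vfun_bellman u :
  bellman_solution (fun s => \sum_a pi s a * u s a) (Vfun P gamma pi u).
Proof.
move=> s; rewrite {1}/Vfun [in RHS]mulr_sumr -big_split /=.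
by apply: eq_bigr => a _; rewrite Qfun_bellman mulrDr mulrCA.
Qed.

Lemma Qfun_lin (I : finType) (u : S -> A -> R) (k : I -> R) (U : I -> S -> A -> R) s a :
  Qfun P gamma pi (fun s a => u s a + \sum_i k i * U i s a) s a =
  Qfun P gamma pi u s a + \sum_i k i * Qfun P gamma pi (U i) s a.
Proof.
rewrite QfunE (_ : expected_reward _ s a = fun t =>
    expected_reward u s a t + \sum_i k i * expected_reward (U i) s a t); last first.
  by apply/funext => t; exact: expected_reward_lin.
rewrite (discounted_sumD gamma01); last 2 first.
- exact: bounded_expected_reward.
- by apply: bounded_seq_sum => i; exact: bounded_expected_reward.
by rewrite (discounted_sum_lin gamma01) // => i; exact: bounded_expected_reward.
Qed.

Lemma Vrho_lin (rho : S -> R) (I : finType) (u : S -> A -> R) (k : I -> R)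
    (U : I -> S -> A -> R) :
  Vrho P gamma rho pi (fun s a => u s a + \sum_i k i * U i s a) =
  Vrho P gamma rho pi u + \sum_i k i * Vrho P gamma rho pi (U i).
Proof.
rewrite /Vrho /Vfun.
under eq_bigr do under eq_bigr do rewrite Qfun_lin mulrDr.
under eq_bigr do rewrite big_split mulrDr /=.
rewrite big_split /=; congr (_ + _).
under [RHS]eq_bigr do rewrite mulr_sumr.
rewrite [RHS]exchange_big; apply: eq_bigr => s _ /=.
under [RHS]eq_bigr do rewrite mulrCA.
rewrite -mulr_sumr; congr (_ * _).
under [RHS]eq_bigr do rewrite mulr_sumr.
rewrite [RHS]exchange_big; apply: eq_bigr => a _ /=.
by rewrite mulr_sumr; apply: eq_bigr => i _; rewrite mulrCA.
Qed.

Definition occupancy s0 s := discounted_sum gamma (fun t => st_prob P pi s0 t s).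

Lemma occupancy_first_step s0 s :
  occupancy s0 s = (if s == s0 then 1 else 0) +
    gamma * \sum_s1 (\sum_a pi s0 a * P s0 a s1) * occupancy s1 s.
Proof.
have bounded_st s1 : bounded_seq (fun t => st_prob P pi s1 t s).
  by exists 1 => t; rewrite ger0_norm ?(st_prob_le1 hP hpi) ?(st_prob_ge0 hP hpi).
rewrite /occupancy discounted_sumS //; congr (_ + _ * _).
under eq_fun do rewrite st_prob_first_step.
exact: discounted_sum_lin.
Qed.

Lemma occupancy_bellman (g : S -> R) :
  bellman_solution g (fun s0 => \sum_s occupancy s0 s * g s).
Proof.
move=> s0 /=; under eq_bigr do rewrite occupancy_first_step mulrDl.
rewrite big_split /=; congr (_ + _).
  by under eq_bigr do rewrite mulr_if0l mul1r; rewrite sum_if_eq.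
under eq_bigr do rewrite -mulrA.
rewrite -mulr_sumr; congr (_ * _).
transitivity (\sum_s1 \sum_a \sum_s pi s0 a * P s0 a s1 * (occupancy s1 s * g s)).
  under eq_bigr do rewrite mulr_suml.
  rewrite exchange_big /=; apply: eq_bigr => s1 _.
  under eq_bigr do rewrite -mulrA mulr_suml.
  by rewrite exchange_big.
rewrite exchange_big /=; apply: eq_bigr => a _.
rewrite mulr_sumr; apply: eq_bigr => s1 _.
by rewrite !mulr_sumr; apply: eq_bigr => s _; rewrite !mulrA.
Qed.

End Bellman.

Section BellmanMatrix.
Variables (R : realType) (S A : finType) (P : S -> A -> S -> R) (gamma : R).
Hypotheses (hP : is_kernel P) (gamma01 : 0 <= gamma < 1).

(* The transpose of I - gamma P_pi, in the coordinates given by enum_rank: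
   on row vectors, z *m bellman_mx pi = z - gamma P_pi z (bellman_mx_row). *)
Definition bellman_mx (pi : S -> A -> R) : 'M[R]_#|S| := \matrix_(i, j)
  ((i == j)%:R - gamma * \sum_a pi (enum_val j) a * P (enum_val j) a (enum_val i)).

Definition row_of (f : S -> R) : 'rV[R]_#|S| := \row_j f (enum_val j).

Lemma bellman_mx_row pi (z : 'rV[R]_#|S|) s :
  (z *m bellman_mx pi) 0 (enum_rank s) =
  z 0 (enum_rank s) - gamma * \sum_a pi s a * \sum_s1 P s a s1 * z 0 (enum_rank s1).
Proof.
rewrite mxE; under eq_bigr do rewrite mxE mulrBr mulr_natr mulrb.
rewrite sumrB; congr (_ - _); first by rewrite -big_mkcond big_pred1_eq.
rewrite enum_rankK (reindex enum_rank) /=; last exact/onW_bij/enum_rank_bij.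
under eq_bigr do rewrite enum_rankK mulrCA mulr_sumr.
rewrite -mulr_sumr; congr (_ * _).
rewrite exchange_big /=; apply: eq_bigr => a _.
by rewrite mulr_sumr; apply: eq_bigr => s1 _; rewrite mulrC -mulrA.
Qed.

Lemma bellman_mx_unit pi : is_policy pi -> bellman_mx pi \in unitmx.
Proof.
move=> hpi; rewrite unitmxE unitfE; apply/negP => /det0P[z nz zM].
have z0 : forall s, z 0 (enum_rank s) = 0.
  apply: (bellman_solution0 hP gamma01 hpi (z := fun s => z 0 (enum_rank s))) => s /=.
  by apply/eqP; rewrite add0r -subr_eq0 -bellman_mx_row zM mxE.
by move/eqP: nz; apply; apply/matrixP => i j; rewrite ord1 mxE -(enum_valK j) z0.
Qed.

Lemma bellman_solution_mx pi (g z : S -> R) :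
  is_policy pi -> bellman_solution P gamma pi g z ->
  forall s, z s = (row_of g *m invmx (bellman_mx pi)) 0 (enum_rank s).
Proof.
move=> hpi hz; apply: (bellman_solution_uniq hP gamma01 hpi hz) => s /=.
apply/eqP; rewrite -subr_eq; apply/eqP.
by rewrite -bellman_mx_row mulmxKV ?bellman_mx_unit // mxE enum_rankK.
Qed.

Lemma Vfun_mx pi u s : is_policy pi ->
  Vfun P gamma pi u s =
  (row_of (fun s => \sum_a pi s a * u s a) *m invmx (bellman_mx pi)) 0 (enum_rank s).
Proof. by move=> hpi; apply: bellman_solution_mx => //; exact: Vfun_bellman. Qed.

End BellmanMatrix.

Section DerivativeRules.
Variables (R : realType) (V : normedModType R).
Implicit Types (f g : V -> R) (x v : V).

Lemma differentiable_big (I : Type) (r : seq I) (F : I -> V -> R) x :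
  (forall i, differentiable (F i) x) ->
  differentiable (fun y => \sum_(i <- r) F i y) x.
Proof.
move=> dF; elim: r => [|i r IH].
  by under eq_fun do rewrite big_nil; exact: differentiable_cst.
by under eq_fun do rewrite big_cons; exact: differentiableD.
Qed.

Lemma differentiable_prod (I : Type) (r : seq I) (F : I -> V -> R) x :
  (forall i, differentiable (F i) x) ->
  differentiable (fun y => \prod_(i <- r) F i y) x.
Proof.
move=> dF; elim: r => [|i r IH].
  by under eq_fun do rewrite big_nil; exact: differentiable_cst.
by under eq_fun do rewrite big_cons; exact: differentiableM.
Qed.

Lemma differentiable_det n (F : V -> 'M[R]_n) x :
  (forall i j, differentiable (fun y => F y i j) x) ->
  differentiable (fun y => \det (F y)) x.
Proof.
move=> dF; rewrite /determinant; apply: differentiable_big => s.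
apply: differentiableM; first exact: differentiable_cst.
by apply: differentiable_prod => i; exact: dF.
Qed.

Lemma differentiable_cofactor n (F : V -> 'M[R]_n) x i j :
  (forall i j, differentiable (fun y => F y i j) x) ->
  differentiable (fun y => cofactor (F y) i j) x.
Proof.
move=> dF; rewrite /cofactor; apply: differentiableM; first exact: differentiable_cst.
apply: differentiable_det => k l; under eq_fun do rewrite !mxE.
exact: dF.
Qed.

(* Cramer's rule: the entries of the inverse are cofactors divided by the determinant. *)
Lemma differentiable_invmx n (F : V -> 'M[R]_n) x i j :
  (forall y, F y \in unitmx) -> (forall i j, differentiable (fun y => F y i j) x) ->
  differentiable (fun y => invmx (F y) i j) x.
Proof.
move=> Funit dF; under eq_fun do rewrite /invmx Funit !mxE.
apply: differentiableM; last exact: differentiable_cofactor.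
apply: differentiableV; first exact: differentiable_det.
by rewrite -unitfE -unitmxE.
Qed.

Lemma deriveD_fun f g x v : differentiable f x -> differentiable g x ->
  'D_v (fun y => f y + g y) x = 'D_v f x + 'D_v g x.
Proof. by move=> df dg; exact: deriveD (diff_derivable df) (diff_derivable dg). Qed.

Lemma deriveM_fun f g x v : differentiable f x -> differentiable g x ->
  'D_v (fun y => f y * g y) x = f x * 'D_v g x + g x * 'D_v f x.
Proof. by move=> df dg; exact: deriveM (diff_derivable df) (diff_derivable dg). Qed.

Lemma deriveMl_fun (c : R) f x v : differentiable f x ->
  'D_v (fun y => c * f y) x = c * 'D_v f x.
Proof. by move=> df; exact: deriveMl (diff_derivable df). Qed.

Lemma deriveN_fun f x v : differentiable f x ->
  'D_v (fun y => - f y) x = - 'D_v f x.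
Proof. by move=> df; exact: deriveN (diff_derivable df). Qed.

Lemma derive_addr_cst (c : R) f x v : differentiable f x ->
  'D_v (fun y => f y + c) x = 'D_v f x.
Proof.
by move=> df; rewrite (deriveD_fun v df (differentiable_cst c x)) derive_cst addr0.
Qed.

Lemma derive_big (I : Type) (r : seq I) (F : I -> V -> R) x v :
  (forall i, differentiable (F i) x) ->
  'D_v (fun y => \sum_(i <- r) F i y) x = \sum_(i <- r) 'D_v (F i) x.
Proof.
move=> dF; elim: r => [|i r IH].
  by under eq_fun do rewrite big_nil; rewrite big_nil derive_cst.
under eq_fun do rewrite big_cons.
by rewrite big_cons deriveD_fun ?IH //; exact: differentiable_big.
Qed.

End DerivativeRules.

Section PolicyGradient.
Variables (R : realType) (S A : finType) (P : S -> A -> S -> R) (gamma : R).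
Variables (V : normedModType R) (pi : V -> S -> A -> R).
Hypotheses (hP : is_kernel P) (gamma01 : 0 <= gamma < 1).
Hypotheses (hpi : forall th, is_policy (pi th))
  (dpi : forall s a th, differentiable (fun y => pi y s a) th).

Lemma differentiable_Vfun u s th :
  differentiable (fun y => Vfun P gamma (pi y) u s) th.
Proof.
have dpi_mul s' a (w : R) : differentiable (fun y => pi y s' a * w) th.
  by apply: differentiableM => //; exact: differentiable_cst.
under eq_fun => y do rewrite (Vfun_mx hP gamma01 u s (hpi y)) mxE.
apply: differentiable_big => j; apply: differentiableM.
  by under eq_fun do rewrite mxE; apply: differentiable_big => a; exact: dpi_mul.
apply: differentiable_invmx => [y|i k]; first exact: bellman_mx_unit.
under eq_fun do rewrite mxE.
apply: differentiableB; first exact: differentiable_cst.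
apply: differentiableM; first exact: differentiable_cst.
by apply: differentiable_big => a; exact: dpi_mul.
Qed.

Lemma differentiable_Qfun u s a th :
  differentiable (fun y => Qfun P gamma (pi y) u s a) th.
Proof.
under eq_fun => y do rewrite (Qfun_bellman hP gamma01 (hpi y)).
apply: differentiableD; first exact: differentiable_cst.
apply: differentiableM; first exact: differentiable_cst.
apply: differentiable_big => s1; apply: differentiableM; first exact: differentiable_cst.
exact: differentiable_Vfun.
Qed.

Lemma differentiable_Vrho rho u th :
  differentiable (fun y => Vrho P gamma rho (pi y) u) th.
Proof.
apply: differentiable_big => s; apply: differentiableM; first exact: differentiable_cst.
exact: differentiable_Vfun.
Qed.

Lemma derive_Qfun u s a th v :
  'D_v (fun y => Qfun P gamma (pi y) u s a) th =
  gamma * \sum_s1 P s a s1 * 'D_v (fun y => Vfun P gamma (pi y) u s1) th.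
Proof.
have dPV : differentiable (fun y => \sum_s1 P s a s1 * Vfun P gamma (pi y) u s1) th.
  apply: differentiable_big => s1; apply: differentiableM; first exact: differentiable_cst.
  exact: differentiable_Vfun.
under eq_fun => y do rewrite (Qfun_bellman hP gamma01 (hpi y)) addrC.
rewrite derive_addr_cst; last by apply: differentiableM => //; exact: differentiable_cst.
rewrite deriveMl_fun // derive_big => [|s1]; last first.
  by apply: differentiableM; [exact: differentiable_cst | exact: differentiable_Vfun].
by under eq_bigr => s1 _ do rewrite (deriveMl_fun _ _ (differentiable_Vfun u s1 th)).
Qed.

Section AtParameter.
Variables (u : S -> A -> R) (th v : V).

Let g s := \sum_a Qfun P gamma (pi th) u s a * 'D_v (fun y => pi y s a) th.

Lemma derive_Vfun_bellman :
  bellman_solution P gamma (pi th) g (fun s => 'D_v (fun y => Vfun P gamma (pi y) u s) th).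
Proof.
move=> s; rewrite {1}/Vfun derive_big => [|a]; last first.
  by apply: differentiableM; [exact: dpi | exact: differentiable_Qfun].
under eq_bigr => a _ do
  rewrite (deriveM_fun _ (dpi s a th) (differentiable_Qfun u s a th)) derive_Qfun.
rewrite big_split /= addrC; congr (_ + _).
by rewrite mulr_sumr; apply: eq_bigr => a _; rewrite mulrCA.
Qed.

Lemma derive_Vfun s :
  'D_v (fun y => Vfun P gamma (pi y) u s) th =
  \sum_s' occupancy P gamma (pi th) s s' * g s'.
Proof.
exact: (bellman_solution_uniq hP gamma01 (hpi th) derive_Vfun_bellman
  (occupancy_bellman hP gamma01 (hpi th) g)).
Qed.

Lemma policy_gradient (rho : S -> R) :
  'D_v (fun y => Vrho P gamma rho (pi y) u) th =
  \sum_s (dvisit P gamma rho (pi th) s / (1 - gamma) *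
    \sum_a Qfun P gamma (pi th) u s a * 'D_v (fun y => pi y s a) th).
Proof.
rewrite /Vrho derive_big => [|s]; last first.
  by apply: differentiableM; [exact: differentiable_cst | exact: differentiable_Vfun].
under eq_bigr => s _ do
  rewrite (deriveMl_fun _ _ (differentiable_Vfun u s th)) derive_Vfun mulr_sumr.
rewrite exchange_big /=; apply: eq_bigr => s _.
have /andP[_ g1] := gamma01.
rewrite /dvisit [_ / (1 - gamma)]mulrC mulrA mulVf ?mul1r; last by rewrite subr_eq0 gt_eqF.
by rewrite mulr_suml; apply: eq_bigr => s0 _; rewrite mulrA.
Qed.

End AtParameter.

Lemma derive_Vrho_lin rho (I : finType) (u : S -> A -> R) (k : I -> R)
    (U : I -> S -> A -> R) th v :
  'D_v (fun y => Vrho P gamma rho (pi y) (fun s a => u s a + \sum_i k i * U i s a)) th =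
  'D_v (fun y => Vrho P gamma rho (pi y) u) th +
  \sum_i k i * 'D_v (fun y => Vrho P gamma rho (pi y) (U i)) th.
Proof.
under eq_fun => y do rewrite (Vrho_lin hP gamma01 (hpi y)).
rewrite deriveD_fun; last 2 first.
- exact: differentiable_Vrho.
- apply: differentiable_big => i; apply: differentiableM; first exact: differentiable_cst.
  exact: differentiable_Vrho.
congr (_ + _); rewrite derive_big => [|i]; last first.
  by apply: differentiableM; [exact: differentiable_cst | exact: differentiable_Vrho].
by under eq_bigr => i _ do rewrite (deriveMl_fun _ _ (differentiable_Vrho rho (U i) th)).
Qed.

End PolicyGradient.

Section SquaredNegativePart.
Variable R : realType.
Local Open Scope classical_set_scope.

Definition sqr_min0 (x : R) := Num.min x 0 ^+ 2.

Lemma sqr_min0_taylor (x t : R) :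
  `|2 * Num.min x 0 * t - (sqr_min0 (x + t) - sqr_min0 x)| <= t ^+ 2.
Proof.
rewrite /sqr_min0 ler_norml.
by case: (leP x 0) => hx; case: (leP (x + t) 0) => hxt; apply/andP; split; nra.
Qed.

Lemma sqr_min0_cvg (x : R) :
  (fun h : R => h^-1 *: ((sqr_min0 \o shift x) (h *: 1) - sqr_min0 x)) @ 0^' -->
  2 * Num.min x 0.
Proof.
apply/cvgrPdist_le => e e0; near=> t.
have tn0 : t != 0 by near: t; exact: nbhs_dnbhs_neq.
have te : `|t| <= e by near: t; exact: dnbhs0_le.
rewrite /= [t *: 1]mulr1 [t + x]addrC.
have -> : 2 * Num.min x 0 = t^-1 * (2 * Num.min x 0 * t) by field.
rewrite [_ *: _]/(_ * _) -mulrBr normrM normfV; apply: le_trans te.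
rewrite ler_pdivrMl ?normr_gt0 //; apply: le_trans (sqr_min0_taylor x t) _.
by rewrite -normrM -expr2 ger0_norm ?sqr_ge0.
Unshelve. all: by end_near.
Qed.

Lemma is_derive_sqr_min0 (x : R) : is_derive x 1 sqr_min0 (2 * Num.min x 0).
Proof.
apply: DeriveDef; first by apply/cvg_ex; exists (2 * Num.min x 0); exact: sqr_min0_cvg.
by apply/cvg_lim; [exact: Rhausdorff | exact: sqr_min0_cvg].
Qed.

Lemma differentiable_sqr_min0 (x : R) : differentiable sqr_min0 x.
Proof. exact/derivable1_diffP/ex_derive/is_derive_sqr_min0. Qed.

Variable V : normedModType R.

Lemma differentiable_sqr_min0_comp (f : V -> R) x : differentiable f x ->
  differentiable (fun y => sqr_min0 (f y)) x.
Proof. by move=> df; apply: differentiable_comp => //; exact: differentiable_sqr_min0. Qed.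

Lemma derive_sqr_min0_comp (f : V -> R) x v : differentiable f x ->
  'D_v (fun y => sqr_min0 (f y)) x = 2 * Num.min (f x) 0 * 'D_v f x.
Proof.
move=> df; have dsq := differentiable_sqr_min0 (f x).
have dcomp : differentiable (sqr_min0 \o f) x by exact: differentiable_comp.
change ('D_v (sqr_min0 \o f) x = 2 * Num.min (f x) 0 * 'D_v f x).
rewrite deriveE // diff_comp //= diff1E // derive1E.
rewrite (@derive_val _ _ _ _ _ _ _ (is_derive_sqr_min0 (f x))) -deriveE //.
by rewrite [_ *: _]/(_ * _) mulrC.
Qed.

End SquaredNegativePart.

Section AugmentedLagrangian.
Variables (R : realType) (S A : finType) (m : nat).
Variables (P : S -> A -> S -> R) (rho : S -> R) (gamma : R) (r : S -> A -> R).
Variables (c : 'I_m -> S -> A -> R) (b : 'I_m -> R) (lam : 'I_m -> R) (beta : R).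
Variables (V : normedModType R) (pi : V -> S -> A -> R).
Hypotheses (hP : is_kernel P) (gamma01 : 0 <= gamma < 1).
Hypotheses (hpi : forall th, is_policy (pi th))
  (dpi : forall s a th, differentiable (fun y => pi y s a) th).

Let violation i y := Vrho P gamma rho (pi y) (c i) - b i - lam i / beta.

Let differentiable_violation i th : differentiable (violation i) th.
Proof.
do 2![apply: differentiableD; last exact: differentiable_cst].
exact: differentiable_Vrho.
Qed.

Lemma augLagE :
  (fun y => augLag P gamma rho r c b beta lam (pi y)) =
  fun y => Vrho P gamma rho (pi y) r +
    beta / 2 * \sum_i (- sqr_min0 (violation i y) + lam i ^+ 2 / beta ^+ 2).
Proof. by []. Qed.

Lemma differentiable_augLag th :
  differentiable (fun y => augLag P gamma rho r c b beta lam (pi y)) th.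
Proof.
rewrite augLagE; apply: differentiableD; first exact: differentiable_Vrho.
apply: differentiableM; first exact: differentiable_cst.
apply: differentiable_big => i; apply: differentiableD; last exact: differentiable_cst.
exact/differentiableN/differentiable_sqr_min0_comp.
Qed.

Lemma derive_augLag th v :
  'D_v (fun y => augLag P gamma rho r c b beta lam (pi y)) th =
  'D_v (fun y => Vrho P gamma rho (pi y) r) th +
  \sum_i - (beta * Num.min (violation i th) 0) *
         'D_v (fun y => Vrho P gamma rho (pi y) (c i)) th.
Proof.
have dsq i : differentiable (fun y => - sqr_min0 (violation i y)) th.
  exact/differentiableN/differentiable_sqr_min0_comp.
have dpen i :
    differentiable (fun y => - sqr_min0 (violation i y) + lam i ^+ 2 / beta ^+ 2) th.
  by apply: differentiableD => //; exact: differentiable_cst.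
rewrite augLagE deriveD_fun; last 2 first.
- exact: differentiable_Vrho.
- by apply: differentiableM; [exact: differentiable_cst | exact: differentiable_big].
congr (_ + _); rewrite deriveMl_fun; last exact: differentiable_big.
rewrite derive_big // mulr_sumr; apply: eq_bigr => i _.
rewrite derive_addr_cst // deriveN_fun; last exact: differentiable_sqr_min0_comp.
have dVc : differentiable (fun y => Vrho P gamma rho (pi y) (c i)) th.
  exact: differentiable_Vrho.
rewrite derive_sqr_min0_comp // /violation /=.
rewrite derive_addr_cst; last by apply: differentiableD => //; exact: differentiable_cst.
by rewrite derive_addr_cst //; field.
Qed.

Lemma GammaE th :
  Gamma P gamma rho r c b beta lam (pi th) =
  fun s a => r s a + \sum_i - (beta * Num.min (violation i th) 0) * c i s a.
Proof.
apply/funext => s; apply/funext => a; rewrite /Gamma /violation mulr_sumr -sumrN.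
by congr (_ + _); apply: eq_bigr => i _; ring.
Qed.

End AugmentedLagrangian.

Unset Implicit Arguments.

Theorem proposition1 (R : realType) (S A : finType) (m d : nat)
  (P : S -> A -> S -> R) (rho : S -> R) (gamma : R)
  (r : S -> A -> R) (c : 'I_m -> S -> A -> R) (b : 'I_m -> R)
  (lam : 'I_m -> R) (beta : R)
  (pi : 'rV[R]_d -> S -> A -> R) (theta : 'rV[R]_d) :
  is_kernel P -> is_distr rho -> 0 <= gamma < 1 ->
  (forall s a, 0 <= r s a <= 1) ->
  (forall i s a, 0 <= c i s a <= 1) ->
  (forall i, 0 <= b i) ->
  0 < beta ->
  (forall th, is_policy (pi th)) ->
  (forall s a th, differentiable (fun th' => pi th' s a) th) ->
  differentiable (fun th => augLag P gamma rho r c b beta lam (pi th)) theta /\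
  forall v : 'rV[R]_d,
    'D_v (fun th => augLag P gamma rho r c b beta lam (pi th)) theta =
    \sum_(s : S) (dvisit P gamma rho (pi theta) s / (1 - gamma) *
      \sum_(a : A) Qfun P gamma (pi theta)
                     (Gamma P gamma rho r c b beta lam (pi theta)) s a *
                   'D_v (fun th => pi th s a) theta).
Proof.
move=> hP _ gamma01 _ _ _ _ hpi dpi.
split=> [|v]; first exact: differentiable_augLag.
rewrite -(policy_gradient hP gamma01 hpi dpi) GammaE.
by rewrite derive_Vrho_lin // derive_augLag.
Qed.
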